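(* Let $G$ be an abelian group and $S\subseteq G$ a finite nonempty set that tiles $G$ by translation. Then every $S$-polychromatic coloring of $G$ with $|S|$ colors is also a $(-S)$-polychromatic coloring, where $-S=\{-s:s\in S\}$.
   Context: For $A\subseteq G$, a coloring of $G$ is $A$-polychromatic if every translate $n+A=\{n+a:a\in A\}$, $n\in G$, contains an element of each color. $S$ tiles $G$ by translation if there is $T\subseteq G$ with $S+T=G$ such that $s_1+t_1=s_2+t_2$ with $s_i\in S$, $t_i\in T$ implies $s_1=s_2$ and $t_1=t_2$. *)

From HB Require Import structures.
From mathcomp Require Import all_boot all_order all_algebra.
Set Implicit Arguments. Unset Strict Implicit. Unset Printing Implicit Defensive.
Import GRing.Theory.
Local Open Scope ring_scope.

(* An abelian group G is a zmodType.  A finite subset S of G is given as a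
   duplicate-free sequence; a coloring with k colors is a map G -> 'I_k. *)

Definition polychromatic (G : zmodType) (A : seq G) (k : nat) (c : G -> 'I_k) : Prop :=
  forall (n : G) (i : 'I_k), exists2 a, a \in A & c (n + a) = i.

Definition tiles (G : zmodType) (S : seq G) : Prop :=
  exists T : G -> Prop,
    (forall g : G, exists s t, [/\ s \in S, T t & s + t = g]) /\
    (forall s1 s2 t1 t2, s1 \in S -> s2 \in S -> T t1 -> T t2 ->
        s1 + t1 = s2 + t2 -> s1 = s2 /\ t1 = t2).

Definition negS (G : zmodType) (S : seq G) : seq G := map (fun s => - s) S.

From HB Require Import structures.
From mathcomp Require Import all_boot all_order all_algebra.
Import GRing.Theory.
Local Open Scope ring_scope.

(* With exactly |S| colors, every translate m + S is a rainbow: each color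
   occurs there exactly once.  Fix a target n and a color i, pick s0 in S,
   and for s' in S let phi s' be the element of S whose point in the
   translate (n - s0 - s') + S has color i.  If phi s1 = phi s2 = s with
   s1 <> s2, the translate (n - s0 + s - s1 - s2) + S would contain the two
   distinct points n - s0 - s2 + s and n - s0 - s1 + s of color i.  So phi
   is a permutation of S, some s' has phi s' = s0, and then n - s' has
   color i. *)

Lemma uniq_map_inj_in (T1 T2 : eqType) (f : T1 -> T2) (s : seq T1) :
  uniq (map f s) -> {in s &, injective f}.
Proof.
elim: s => [|a s IHs] //= /andP[fa_notin uniq_fs] x y.
rewrite !inE => /orP[/eqP->|xs] /orP[/eqP->|ys] //= fxy.
- by move: fa_notin; rewrite fxy map_f.
- by move: fa_notin; rewrite -fxy map_f.
- exact: IHs.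
Qed.

Lemma inj_in_self_map_onto (T : eqType) (f : T -> T) (s : seq T) :
  uniq s -> {in s, forall x, f x \in s} -> {in s &, injective f} ->
  forall y, y \in s -> exists2 x, x \in s & f x = y.
Proof.
move=> uniq_s f_s f_inj y ys.
have uniq_fs : uniq (map f s) by rewrite map_inj_in_uniq.
have fs_sub : {subset map f s <= s} by move=> _ /mapP[x xs ->]; exact: f_s.
have [_ fs_eq] := uniq_min_size uniq_fs fs_sub (eq_leq (esym (size_map f s))).
by move: ys; rewrite -fs_eq => /mapP[x xs ->]; exists x.
Qed.

Section RainbowTranslates.

Variables (G : zmodType) (S : seq G) (c : G -> 'I_(size S)).
Hypotheses (uniq_S : uniq S) (poly_c : polychromatic S c).

Lemma polychromatic_translate_inj (m : G) :
  {in S &, injective (fun s => c (m + s))}.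
Proof.
apply: uniq_map_inj_in; apply: (leq_size_uniq (enum_uniq 'I_(size S))).
  by move=> i _; have [a aS cai] := poly_c m i; apply/mapP; exists a.
by rewrite size_map size_enum_ord.
Qed.

Definition color_hit (m : G) (i : 'I_(size S)) : G :=
  nth 0 S (find (fun s => c (m + s) == i) S).

Lemma color_hitP m i : color_hit m i \in S /\ c (m + color_hit m i) = i.
Proof.
have [a aS cai] := poly_c m i.
have hit : has (fun s => c (m + s) == i) S by apply/hasP; exists a => //; apply/eqP.
by split; [rewrite mem_nth // -has_find | apply/eqP; exact: (nth_find 0 hit)].
Qed.

Lemma color_hit_shift_inj (g : G) (i : 'I_(size S)) :
  {in S &, injective (fun s' => color_hit (g - s') i)}.
Proof.
move=> s1 s2 s1S s2S /= hit_eq.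
have [_ c1] := color_hitP (g - s1) i; have [_ c2] := color_hitP (g - s2) i.
move: c1 c2; rewrite hit_eq; set s := color_hit (g - s2) i => c1 c2.
apply: (polychromatic_translate_inj (g + s - s1 - s2)) => //.
have -> : g + s - s1 - s2 + s1 = g - s2 + s by rewrite addrAC subrK addrAC.
by rewrite c2 subrK addrAC c1.
Qed.

Lemma opp_translate_has_color (n : G) (i : 'I_(size S)) (s0 : G) : s0 \in S ->
  exists2 s', s' \in S & c (n - s') = i.
Proof.
move=> s0S; pose g := n - s0.
have [|s' s'S hit_s'] :=
  @inj_in_self_map_onto _ (fun s' => color_hit (g - s') i) S uniq_S _
    (@color_hit_shift_inj g i) s0 s0S.
  by move=> s' _; case: (color_hitP (g - s') i).
exists s' => //; have [_ <-] := color_hitP (g - s') i.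
by rewrite /= hit_s' /g addrAC subrK.
Qed.

End RainbowTranslates.

Theorem corollary15 (G : zmodType) (S : seq G) :
  uniq S -> S != [::] -> tiles S ->
  forall c : G -> 'I_(size S),
    polychromatic S c -> polychromatic (negS S) c.
Proof.
move=> uniq_S S_nonempty _ c poly_c n i.
have s0S : nth 0 S 0 \in S by rewrite mem_nth // lt0n size_eq0.
have [s' s'S cni] := @opp_translate_has_color G S c uniq_S poly_c n i _ s0S.
by exists (- s'); rewrite ?map_f.
Qed.
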